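(* In the setting of the context, with $\alpha_k=\frac a{(b+k)^\gamma}$, $\gamma\in(\frac12,1)$, $a>0$, $b>1$, $\frac a{b^\gamma}\le\frac1{2M\tilde L}$, for every $n\ge0$ and $0\le k\le n$, $$B_k\le\frac{a^2M\tilde Lc(A)\sigma_{\max}^2}{2\gamma-1}(b+k-1)^{1-2\gamma}\exp\Big(\frac{a\sigma_{\min}^2}{1-\gamma}(b+k+1)^{1-\gamma}\Big)\exp\Big(-\frac{a\sigma_{\min}^2}{1-\gamma}(b+n+1)^{1-\gamma}\Big).$$
   Context: Standing setting: $M\ge N$, $A\in\mathbb{R}^{M\times N}$ of full column rank with rows $a_1,\dots,a_M$; singular values $\sigma_1\ge\dots\ge\sigma_N>0$, $\sigma_{\max}=\sigma_1$, $\sigma_{\min}=\sigma_N$, $c(A)=\sigma_{\max}^2/\sigma_{\min}^2$, $\tilde L=\max_i\|a_i\|^2$. Fix $\ell$. For $\alpha>0$: $A(\alpha)=1-2\alpha\sigma_\ell^2$, $B(\alpha)=\alpha^2M\tilde Lc(A)\sigma_{\max}^2$, $p(\alpha)=1-\alpha\sigma_{\min}^2$. For fixed $n$ and $0\le k\le n$: $B_k=\sum_{j=k}^n\Big(\prod_{i=j+1}^nA(\alpha_i)\Big)B(\alpha_j)\Big(\prod_{i=k}^{j-1}p(\alpha_i)\Big)$ (empty products $1$). Step-size scalars $a,b$ are unrelated to the rows $a_i$. *)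

From HB Require Import structures.
From mathcomp Require Import all_boot all_order all_algebra.
From mathcomp Require Import all_classical all_reals sequences exp.
Set Implicit Arguments. Unset Strict Implicit. Unset Printing Implicit Defensive.
Import Order.TTheory GRing.Theory Num.Theory.
Local Open Scope ring_scope.

Section Defs.
Variable R : realType.

Definition row_norm2 (m n : nat) (A : 'M[R]_(m, n)) (i : 'I_m) : R :=
  \sum_(j < n) (A i j) ^+ 2.

Definition Ltilde (m n : nat) (A : 'M[R]_(m, n)) : R :=
  \big[Num.max/0]_(i < m) row_norm2 A i.

Definition is_singular_values (m n : nat) (A : 'M[R]_(m, n)) (sigma : 'I_n -> R) : Prop :=
  (forall i, 0 <= sigma i) /\
  (forall i j : 'I_n, (i <= j)%N -> sigma j <= sigma i) /\
  exists (U : 'M[R]_(m, n)) (V : 'M[R]_n),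
    U^T *m U = 1%:M /\ V^T *m V = 1%:M /\
    A = U *m diag_mx (\row_i sigma i) *m V^T.

Definition alpha (a b gamma : R) (k : nat) : R := a / (b + k%:R) `^ gamma.

Definition Bk (Af Bf pf : R -> R) (al : nat -> R) (n k : nat) : R :=
  \sum_(k <= j < n.+1)
     (\prod_(j.+1 <= i < n.+1) Af (al i)) * Bf (al j) * (\prod_(k <= i < j) pf (al i)).

End Defs.

From HB Require Import structures.
From mathcomp Require Import all_boot all_order all_algebra.
From mathcomp Require Import all_classical all_reals sequences exp.
From mathcomp Require Import ring lra.
Set Implicit Arguments. Unset Strict Implicit. Unset Printing Implicit Defensive.
Import Order.TTheory GRing.Theory Num.Theory.
Local Open Scope ring_scope.

(* Since [2 alpha_i sigma_l^2 >= alpha_i sigma_min^2] and the step sizes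
   decrease, each summand of [B_k] is at most [B(alpha_j)] times the product
   of the [p(alpha_i)] for [k < i <= n].  The sum of the [alpha_j^2] is then
   bounded by an integral of [t^(-2 gamma)], and the product by
   [exp (- sigma_min^2 sum alpha_i)], where the sum is bounded below by an
   integral of [t^(-gamma)]; both comparisons come from tangent-line
   inequalities for powers.  Finally
   [sigma_max^2 <= tr (A^T A) <= M Ltilde] controls the step-size condition. *)

Section PowerInequalities.
Variable R : realType.
Implicit Types r s h x y : R.

Lemma powR_1Dx_le r h : 0 < r -> r < 1 -> 0 <= h -> (1 + h) `^ r <= 1 + r * h.
Proof.
move=> r0 r1 h0.
have := @conjugate_powR R ((1 + h) `^ r) 1 r^-1 (1 - r)^-1 (powR_ge0 _ _) ler01.
rewrite invr_gt0 r0 invr_gt0 subr_gt0 r1 !invrK => /(_ isT isT).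
rewrite addrC subrK => /(_ erefl).
rewrite mulr1 -powRrM mulfV ?gt_eqF // powRr1 ?addr_ge0 // powR1.
by move/le_trans; apply; lra.
Qed.

Lemma powRD1_subr_le r x : 0 < r -> r < 1 -> 0 < x ->
  (x + 1) `^ r - x `^ r <= r * x `^ (r - 1).
Proof.
move=> r0 r1 x0.
have xV0 : 0 <= x^-1 by rewrite invr_ge0 ltW.
have -> : x + 1 = x * (1 + x^-1) by rewrite mulrDr mulr1 mulfV ?gt_eqF.
rewrite (powRM _ (ltW x0) (addr_ge0 ler01 xV0)) powRB ?(gt_eqF x0) ?implybT //.
rewrite (powRr1 (ltW x0)).
have := ler_wpM2l (powR_ge0 x r) (powR_1Dx_le r0 r1 xV0).
by rewrite mulrDr mulr1 mulrCA lerBlDl.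
Qed.

Lemma powRN_subr_ge s y : 0 < s -> 0 < y ->
  s * (y + 1) `^ (- s - 1) <= y `^ (- s) - (y + 1) `^ (- s).
Proof.
move=> s0 y0; have y10 : 0 < y + 1 by lra.
set q := y / (y + 1); have q0 : 0 < q by rewrite divr_gt0.
have -> : y `^ (- s) = q `^ (- s) * (y + 1) `^ (- s).
  by rewrite -powRM ?ltW // /q mulfVK ?gt_eqF.
have -> : (y + 1) `^ (- s - 1) = (y + 1) `^ (- s) * (1 - q).
  rewrite powRB ?(gt_eqF y10) ?implybT // (powRr1 (ltW y10)); congr (_ * _).
  by rewrite /q; field; rewrite gt_eqF.
(* [q^-s = exp (-s ln q) >= 1 - s ln q >= 1 + s (1 - q)], by [ln q <= q - 1]. *)
have q_powRN_ge : 1 + s * (1 - q) <= q `^ (- s).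
  rewrite /powR gt_eqF //; apply: le_trans (expR_ge1Dx _); rewrite lerD2l.
  have := @le_ln1Dx R (q - 1) ltac:(lra); rewrite addrC subrK; nra.
have := ler_wpM2r (powR_ge0 (y + 1) (- s)) q_powRN_ge; nra.
Qed.

End PowerInequalities.

Section StepSizes.
Variables (R : realType) (a b g : R).
Hypotheses (a_gt0 : 0 < a) (b_gt0 : 0 < b).

Let shift_gt0 (j : nat) : 0 < b + j%:R.
Proof. by rewrite ltr_wpDr. Qed.

Lemma alpha_gt0 j : 0 < alpha a b g j.
Proof. by rewrite divr_gt0 ?powR_gt0. Qed.

Lemma alpha_nonincreasing i j : 0 <= g -> (i <= j)%N -> alpha a b g j <= alpha a b g i.
Proof.
move=> g0 ij; rewrite ler_pM2l // lef_pV2 ?posrE ?powR_gt0 //.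
by apply: ge0_ler_powR; rewrite ?nnegrE ?(ltW (shift_gt0 _)) // lerD2l ler_nat.
Qed.

Lemma alpha_sqrE j : alpha a b g j ^+ 2 = a ^+ 2 * (b + j%:R) `^ (- (2 * g)).
Proof.
by rewrite /alpha powRN (mulrC 2) powRrM powR_mulrn ?powR_ge0 // expr_div_n.
Qed.

Lemma sum_alpha_sqr_le k m : 1 / 2 < g -> 1 < b -> (k <= m)%N ->
  \sum_(k <= j < m) alpha a b g j ^+ 2 <=
    a ^+ 2 / (2 * g - 1) * (b + k%:R - 1) `^ (1 - 2 * g).
Proof.
move=> g_gt_half b_gt1 km; set s := 2 * g - 1; have s0 : 0 < s by rewrite /s; lra.
have cs0 : 0 <= a ^+ 2 / s by rewrite divr_ge0 ?sqr_ge0 ?ltW.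
set G := fun j : nat => (b + j%:R - 1) `^ (- s).
have term j : alpha a b g j ^+ 2 <= a ^+ 2 / s * (G j - G j.+1).
  have y0 : 0 < b + j%:R - 1 by have := ler0n R j; lra.
  have := powRN_subr_ge s0 y0; rewrite subrK (_ : - s - 1 = - (2 * g)); last first.
    by rewrite /s; ring.
  move/(ler_wpM2l cs0); rewrite mulrA divfK ?gt_eqF //.
  by rewrite alpha_sqrE /G -[j.+1%:R]natr1 addrA addrK.
rewrite (_ : 1 - 2 * g = - s); last by rewrite /s; ring.
apply: le_trans (ler_sum_nat (fun j _ => term j)) _.
rewrite -mulr_sumr (@telescope_sumr_eq _ _ _ (fun j => - G j)) //; last first.
  by move=> j _; rewrite opprK addrC.
by apply: (ler_wpM2l cs0); rewrite opprK addrC gerBl /G powR_ge0.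
Qed.

Lemma sum_alpha_ge k m : 0 < g -> g < 1 -> (k <= m)%N ->
  a / (1 - g) * ((b + m%:R) `^ (1 - g) - (b + k%:R) `^ (1 - g)) <=
    \sum_(k <= i < m) alpha a b g i.
Proof.
move=> g_gt0 g_lt1 km; set r := 1 - g.
have r0 : 0 < r by rewrite /r; lra.
have r1 : r < 1 by rewrite /r; lra.
have cr0 : 0 <= a / r by rewrite divr_ge0 ?ltW.
set F := fun i : nat => (b + i%:R) `^ r.
have term i : a / r * (F i.+1 - F i) <= alpha a b g i.
  have := powRD1_subr_le r0 r1 (shift_gt0 i).
  move/(ler_wpM2l cr0); rewrite mulrA divfK ?gt_eqF // /F -[i.+1%:R]natr1 addrA.
  move/le_trans; apply; rewrite /alpha (_ : r - 1 = - g) ?powRN //; rewrite /r; ring.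
rewrite -(@telescope_sumr _ _ _ F) // mulr_sumr.
exact: ler_sum_nat.
Qed.

End StepSizes.

Lemma prod_1Bx_le_expR (R : realType) (I : Type) (s : seq I) (x : I -> R) :
  (forall i, x i <= 1) -> \prod_(i <- s) (1 - x i) <= expR (- \sum_(i <- s) x i).
Proof.
move=> x_le1; rewrite -sumrN expR_sum; apply: ler_prod => i _.
by rewrite subr_ge0 x_le1 expR_ge1Dx.
Qed.

Section BkBound.
Variables (R : realType) (Af Bf pf : R -> R) (al : nat -> R).
Hypothesis Af_ge0_le_pf : forall j, 0 <= Af (al j) <= pf (al j).
Hypothesis pf_nondecr : forall j, pf (al j) <= pf (al j.+1).
Hypothesis Bf_ge0 : forall j, 0 <= Bf (al j).

Let pf_ge0 j : 0 <= pf (al j).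
Proof. by case/andP: (Af_ge0_le_pf j) => /le_trans; apply. Qed.

Lemma Bk_le_sum_mul_prod n k : (k <= n)%N ->
  Bk Af Bf pf al n k <=
    (\sum_(k <= j < n.+1) Bf (al j)) * \prod_(k.+1 <= i < n.+1) pf (al i).
Proof.
move=> kn; rewrite /Bk mulr_suml; apply: ler_sum_nat => j /andP[kj jn].
rewrite [X in _ <= _ * X](big_cat_nat (n := j.+1)) //=.
set PA := \prod_(_ <= _ < _) Af _; set PK := \prod_(k <= _ < j) _.
rewrite (_ : PA * _ * PK = Bf (al j) * (PK * PA)); last by ring.
apply: ler_wpM2l => //; apply: ler_pM; rewrite ?prodr_ge0 //.
- by move=> i _; case/andP: (Af_ge0_le_pf i).
- by rewrite big_add1; apply: ler_prod => i _; rewrite pf_ge0 pf_nondecr.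
- by apply: ler_prod => i _; exact: Af_ge0_le_pf.
Qed.

End BkBound.

Lemma Bk_alpha_le (R : realType) (a b g sl smin s0 K : R) (Af Bf pf : R -> R) n k :
  1 / 2 < g -> g < 1 -> 0 < a -> 1 < b ->
  0 < smin -> smin <= sl -> sl <= s0 ->
  2 * (a / b `^ g) * s0 ^+ 2 <= 1 -> 0 <= K -> (k <= n)%N ->
  (forall al, Af al = 1 - 2 * al * sl ^+ 2) ->
  (forall al, Bf al = al ^+ 2 * K) ->
  (forall al, pf al = 1 - al * smin ^+ 2) ->
  Bk Af Bf pf (alpha a b g) n k <=
    K * a ^+ 2 / (2 * g - 1) * (b + k%:R - 1) `^ (1 - 2 * g)
    * expR (a * smin ^+ 2 / (1 - g) * (b + k%:R + 1) `^ (1 - g))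
    * expR (- (a * smin ^+ 2 / (1 - g)) * (b + n%:R + 1) `^ (1 - g)).
Proof.
move=> g_gt_half g_lt1 a_gt0 b_gt1 smin_gt0 smin_sl sl_s0 step K_ge0 kn AfE BfE pfE.
have b_gt0 : 0 < b by lra.
have g_gt0 : 0 < g by lra.
set al := alpha a b g.
have al0 j : 0 < al j by exact: alpha_gt0.
have al_step j : 2 * al j * s0 ^+ 2 <= 1.
  have := alpha_nonincreasing a_gt0 b_gt0 (ltW g_gt0) (leq0n j).
  rewrite /al {2}/alpha addr0.
  by have := sqr_ge0 s0; nra.
have smin_sl2 : smin ^+ 2 <= sl ^+ 2 by rewrite ler_sqr ?nnegrE //; lra.
have sl_s02 : sl ^+ 2 <= s0 ^+ 2 by rewrite ler_sqr ?nnegrE //; lra.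
have Af_pf j : 0 <= Af (al j) <= pf (al j).
  by rewrite AfE pfE; apply/andP; split; have := al_step j; have := al0 j; nra.
have pf_nondecr j : pf (al j) <= pf (al j.+1).
  rewrite !pfE; have := alpha_nonincreasing a_gt0 b_gt0 (ltW g_gt0) (leqnSn j).
  rewrite -/al.
  by have := sqr_ge0 smin; nra.
have Bf_ge0 j : 0 <= Bf (al j) by rewrite BfE mulr_ge0 ?sqr_ge0.
have sum_Bf_le : \sum_(k <= j < n.+1) Bf (al j) <=
    K * (a ^+ 2 / (2 * g - 1) * (b + k%:R - 1) `^ (1 - 2 * g)).
  rewrite (eq_bigr _ (fun j _ => BfE _)) -mulr_suml mulrC ler_wpM2l //.
  exact: sum_alpha_sqr_le g_gt_half b_gt1 (leqW kn).
have prod_pf_le : \prod_(k.+1 <= i < n.+1) pf (al i) <=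
    expR (a * smin ^+ 2 / (1 - g) * (b + k%:R + 1) `^ (1 - g))
    * expR (- (a * smin ^+ 2 / (1 - g)) * (b + n%:R + 1) `^ (1 - g)).
  rewrite (eq_bigr _ (fun i _ => pfE _)).
  apply: le_trans (prod_1Bx_le_expR _ _) _.
    by move=> i; have := al_step i; have := al0 i; nra.
  rewrite -expRD ler_expR -mulr_suml.
  have := sum_alpha_ge a_gt0 b_gt0 g_gt0 g_lt1 (kn : (k.+1 <= n.+1)%N).
  rewrite -[k.+1%:R]natr1 -[n.+1%:R]natr1 !addrA -/al.
  by have := sqr_ge0 smin; nra.
apply: le_trans (Bk_le_sum_mul_prod Af_pf pf_nondecr Bf_ge0 kn) _.
apply: le_trans (ler_pM _ _ sum_Bf_le prod_pf_le) _.
- by apply: sumr_ge0 => j _.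
- by apply: prodr_ge0 => i _; case/andP: (Af_pf i) => /le_trans; apply.
by rewrite !mulrA.
Qed.

Section SingularValues.
Variables (R : realType) (M N : nat) (A : 'M[R]_(M, N)).

Lemma mxtrace_tr_mulmx_sum_row_norm2 : \tr (A^T *m A) = \sum_(i < M) row_norm2 A i.
Proof.
rewrite /mxtrace /row_norm2 exchange_big /=; apply: eq_bigr => j _.
by rewrite mxE; apply: eq_bigr => i _; rewrite !mxE expr2.
Qed.

Lemma sum_row_norm2_le_Ltilde : \sum_(i < M) row_norm2 A i <= M%:R * Ltilde A.
Proof.
have -> : M%:R * Ltilde A = \sum_(i < M) Ltilde A.
  by rewrite sumr_const card_ord mulr_natl.
by apply: ler_sum => i _; exact: le_bigmax.
Qed.

Lemma mxtrace_tr_mulmx_svd (sigma : 'I_N -> R) : is_singular_values A sigma ->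
  \tr (A^T *m A) = \sum_i sigma i ^+ 2.
Proof.
case=> _ [_ [U [V [UtU [VtV ->]]]]]; set D := diag_mx _.
rewrite !trmx_mul trmxK tr_diag_mx -/D.
have -> : V *m (D *m U^T) *m (U *m D *m V^T) = V *m (D *m D *m V^T).
  by rewrite !mulmxA -(mulmxA (V *m D) U^T U) UtU mulmx1.
rewrite mxtrace_mulC -(mulmxA (D *m D) V^T V) VtV mulmx1 mulmx_diag mxtrace_diag.
by apply: eq_bigr => i _; rewrite !mxE expr2.
Qed.

Lemma singular_value_sqr_le (sigma : 'I_N -> R) i : is_singular_values A sigma ->
  sigma i ^+ 2 <= M%:R * Ltilde A.
Proof.
move=> svA; apply: le_trans (sum_row_norm2_le_Ltilde).
rewrite -mxtrace_tr_mulmx_sum_row_norm2 (mxtrace_tr_mulmx_svd svA) (bigD1 i) //=.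
by rewrite lerDl sumr_ge0 // => j _; exact: sqr_ge0.
Qed.

End SingularValues.

Theorem lemma21 (R : realType) (M N : nat) (A : 'M[R]_(M, N.+1))
  (sigma : 'I_N.+1 -> R) (l : 'I_N.+1) (a b gamma : R) (n k : nat) :
  (N.+1 <= M)%N ->
  \rank A = N.+1 ->
  is_singular_values A sigma ->
  0 < sigma ord_max ->
  1 / 2 < gamma -> gamma < 1 -> 0 < a -> 1 < b ->
  a / b `^ gamma <= 1 / (2 * M%:R * Ltilde A) ->
  (k <= n)%N ->
  let smax := sigma ord0 in
  let smin := sigma ord_max in
  let cA := smax ^+ 2 / smin ^+ 2 in
  let Af := fun al : R => 1 - 2 * al * sigma l ^+ 2 in
  let Bf := fun al : R => al ^+ 2 * M%:R * Ltilde A * cA * smax ^+ 2 in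
  let pf := fun al : R => 1 - al * smin ^+ 2 in
  Bk Af Bf pf (alpha a b gamma) n k <=
    a ^+ 2 * M%:R * Ltilde A * cA * smax ^+ 2 / (2 * gamma - 1)
    * (b + k%:R - 1) `^ (1 - 2 * gamma)
    * expR (a * smin ^+ 2 / (1 - gamma) * (b + k%:R + 1) `^ (1 - gamma))
    * expR (- (a * smin ^+ 2 / (1 - gamma)) * (b + n%:R + 1) `^ (1 - gamma)).
Proof.
move=> _ _ svA smin_gt0 g_gt_half g_lt1 a_gt0 b_gt1 step_le kn; cbv zeta.
set smax := sigma ord0; set smin := sigma ord_max; set cA := smax ^+ 2 / smin ^+ 2.
have [_ [sigma_nonincr _]] := svA.
have smax2_le : smax ^+ 2 <= M%:R * Ltilde A := singular_value_sqr_le ord0 svA.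
have step : 2 * (a / b `^ gamma) * smax ^+ 2 <= 1.
  have ab_gt0 : 0 < a / b `^ gamma by rewrite divr_gt0 ?powR_gt0 //; lra.
  have ML_gt0 : 0 < 2 * M%:R * Ltilde A.
    by have := lt_le_trans ab_gt0 step_le; rewrite div1r invr_gt0.
  move: step_le; rewrite ler_pdivlMr //; have := sqr_ge0 smax; nra.
have ML_ge0 : 0 <= M%:R * Ltilde A := le_trans (sqr_ge0 smax) smax2_le.
have K_ge0 : 0 <= M%:R * Ltilde A * cA * smax ^+ 2.
  by rewrite mulr_ge0 ?sqr_ge0 // mulr_ge0 // divr_ge0 ?sqr_ge0.
rewrite (_ : a ^+ 2 * _ * _ * _ * _ = M%:R * Ltilde A * cA * smax ^+ 2 * a ^+ 2);
  last by ring.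
apply: (Bk_alpha_le (sl := sigma l) (s0 := smax)) => //.
- by apply: sigma_nonincr; rewrite -ltnS ltn_ord.
- exact: sigma_nonincr.
- by move=> al; ring.
Qed.
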